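(* Let $I$ be the set of initial statements of a definite action theory. Every $\mathbf{S5}$-state satisfying $I$ is equivalent to an $\mathbf{S5}$-state $(M',s')$ with $|M'[S]|\le 2^{|\mathcal F|}$.
   Context: Agents $\mathcal{AG}=\{1,\dots,n\}$ (finite), finite set of fluents $\mathcal F$. Belief formulae are built from propositional (fluent) formulae over $\mathcal F$ with $\mathbf B_i$, Boolean connectives and $\mathbf E_\alpha,\mathbf C_\alpha$; $\mathbf C=\mathbf C_{\mathcal{AG}}$. Kripke structure $M$: worlds $M[S]$, interpretations $M[\pi](u)\subseteq\mathcal F$, relations $M[i]$; state $(M,s)$; standard semantics ($\mathbf B_i\varphi$: $\varphi$ at all $M[i]$-successors; $\mathbf E_\alpha$: all $\mathbf B_i$, $i\in\alpha$; $\mathbf C_\alpha\varphi$: $\mathbf E^k_\alpha\varphi$ for all $k\ge0$). $\mathbf{S5}$-state: every $M[i]$ an equivalence relation. Two states are equivalent if they satisfy the same belief formulae. A state satisfies a set $I$ of statements ''initially $\varphi$'' if it satisfies every such $\varphi$. A definite action theory $(I,D)$ consists of a domain $D$ (action descriptions) and a set $I$ of statements each of one of the forms initially $\varphi$, initially $\mathbf C\varphi$, initially $\mathbf C(\mathbf B_i\varphi)$, initially $\mathbf C(\mathbf B_i\varphi\vee\mathbf B_i\neg\varphi)$, initially $\mathbf C(\neg\mathbf B_i\varphi\wedge\neg\mathbf B_i\neg\varphi)$ ($\varphi$ a fluent formula, $i$ an agent), such that for every fluent formula $\varphi$ and agent $i$, $I$ contains a statement of one of the last three forms with this $i$ and $\varphi$.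 *)

From mathcomp Require Import all_boot.
Set Implicit Arguments. Unset Strict Implicit. Unset Printing Implicit Defensive.

Section Logic.
Variables (A : finType) (F : finType) .

Inductive fform :=
| FAtom of F
| FNot of fform
| FAnd of fform & fform
| FOr of fform & fform.

Inductive bform :=
| BFl of fform
| BB of A & bform
| BNot of bform
| BAnd of bform & bform
| BOr of bform & bform
| BImp of bform & bform
| BE of {set A} & bform
| BC of {set A} & bform.

Record kripke (W : Type) := Kripke {
  kval : W -> {set F};
  krel : A -> W -> W -> Prop
}.

Fixpoint fsat (I : {set F}) (p : fform) : Prop :=
  match p with
  | FAtom f => f \in I
  | FNot q => ~ fsat I q
  | FAnd q r => fsat I q /\ fsat I r
  | FOr q r => fsat I q \/ fsat I r
  end.

(* reach M al k u v : v is reachable from u by exactly k steps of relations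
   of agents in al (so E_al^k phi holds at u iff phi holds at all such v) *)
Fixpoint reach W (M : kripke W) (al : {set A}) (k : nat) (u v : W) : Prop :=
  match k with
  | 0 => u = v
  | k'.+1 => exists i, exists w, i \in al /\ krel M i u w /\ reach M al k' w v
  end.

Fixpoint holds W (M : kripke W) (u : W) (p : bform) : Prop :=
  match p with
  | BFl q => fsat (kval M u) q
  | BB i q => forall v, krel M i u v -> holds M v q
  | BNot q => ~ holds M u q
  | BAnd q r => holds M u q /\ holds M u r
  | BOr q r => holds M u q \/ holds M u r
  | BImp q r => holds M u q -> holds M u r
  | BE al q => forall i, i \in al -> forall v, krel M i u v -> holds M v q
  | BC al q => forall k v, reach M al k u v -> holds M v q
  end.

Definition S5 W (M : kripke W) : Prop :=
  forall i, [/\ (forall u, krel M i u u),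
               (forall u v, krel M i u v -> krel M i v u) &
               (forall u v w, krel M i u v -> krel M i v w -> krel M i u w)].

Definition equiv_state W W' (M : kripke W) (s : W) (M' : kripke W') (s' : W') : Prop :=
  forall p, holds M s p <-> holds M' s' p.

Inductive init_stmt :=
| InitF of fform
| InitC of fform
| InitCB of A & fform
| InitCBW of A & fform
| InitCN of A & fform.

Definition CAll (p : bform) := BC setT p.

Definition init_formula (st : init_stmt) : bform :=
  match st with
  | InitF p => BFl p
  | InitC p => CAll (BFl p)
  | InitCB i p => CAll (BB i (BFl p))
  | InitCBW i p => CAll (BOr (BB i (BFl p)) (BB i (BFl (FNot p))))
  | InitCN i p => CAll (BAnd (BNot (BB i (BFl p))) (BNot (BB i (BFl (FNot p)))))
  end.

Definition sat_init W (M : kripke W) (s : W) (I : init_stmt -> Prop) : Prop :=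
  forall st, I st -> holds M s (init_formula st).

Definition definite_init (I : init_stmt -> Prop) : Prop :=
  forall (p : fform) (i : A),
    I (InitCB i p) \/ I (InitCBW i p) \/ I (InitCN i p).

End Logic.

From mathcomp Require Import all_boot.
From Stdlib Require Import Classical.

Set Implicit Arguments. Unset Strict Implicit. Unset Printing Implicit Defensive.

(** Collapse every world reachable from [s] to its interpretation, and let
    agent [i] relate [J] to [J'] whenever some reachable [i]-edge of [M] goes
    from a world interpreted by [J] to one interpreted by [J'].  This is
    faithful because of definiteness: if [J <> J'] and such an edge exists,
    then of the three attitudes of [i] towards the characteristic formula of
    [J'] that [I] makes common belief, only "neither believes it nor its
    negation" is consistent, so EVERY reachable world interpreted by [J] has
    an [i]-successor interpreted by [J'].  Edges of the collapsed model thus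
    lift to [M], the collapse is a bisimulation on the reachable part, and it
    has at most [2 ^ #|F|] worlds. *)

Section CharacteristicFormula.
Variables (F : finType) (f0 : F).

Definition lit (J : {set F}) (f : F) : fform F :=
  if f \in J then FAtom f else FNot (FAtom f).

(* [f0] only serves to build a tautology: there is no nullary fluent formula. *)
Definition taut : fform F := FOr (FAtom f0) (FNot (FAtom f0)).

Definition char_form (J : {set F}) : fform F :=
  foldr (fun f q => FAnd (lit J f) q) taut (enum F).

Lemma fsat_taut I : fsat I taut.
Proof. by rewrite /=; case: (f0 \in I); [left | right]. Qed.

Lemma fsat_lit I J f : fsat I (lit J f) <-> (f \in I) = (f \in J).
Proof.
rewrite /lit; case: (f \in J) => /=; case: (f \in I);
  by split=> // h; exfalso; apply: h.
Qed.

Lemma fsat_conj_lits I J (fs : seq F) :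
  fsat I (foldr (fun f q => FAnd (lit J f) q) taut fs) <->
  {in fs, forall f, (f \in I) = (f \in J)}.
Proof.
elim: fs => [|g fs IH] /=; first by split=> // _; apply: fsat_taut.
rewrite fsat_lit IH; split=> [[eg efs] f|efs].
  by rewrite in_cons => /predU1P [->|]; [| apply: efs].
by split=> [|f fsf]; apply: efs; rewrite in_cons ?eqxx ?fsf ?orbT.
Qed.

Lemma fsat_char_form I J : fsat I (char_form J) <-> I = J.
Proof.
rewrite fsat_conj_lits; split=> [eIJ|-> //].
by apply/setP => f; apply: eIJ; rewrite mem_enum.
Qed.

End CharacteristicFormula.

Lemma box_lift (W X : Type) (f : W -> X) (R : W -> W -> Prop)
    (R' : X -> X -> Prop) (P : W -> Prop) (Q : X -> Prop) u :
  (forall x, R' (f u) x <-> exists2 v, R u v & f v = x) ->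
  (forall v, R u v -> P v <-> Q (f v)) ->
  (forall v, R u v -> P v) <-> (forall x, R' (f u) x -> Q x).
Proof.
move=> liftP PQ; split=> [Pv x /liftP [v Ruv <-]|Qx v Ruv].
  by apply/PQ => //; apply: Pv.
by apply/PQ => //; apply: Qx; apply/liftP; exists v.
Qed.

Section Collapse.
Variables (A F : finType) (W : Type) (M : kripke A F W) (s : W).

Definition reachable (u : W) := exists k, reach M setT k s u.

Lemma reach_rcons (al : {set A}) k x u v i :
  i \in al -> reach M al k x u -> krel M i u v -> reach M al k.+1 x v.
Proof.
move=> ali; elim: k x => [|k IH] x /= => [-> Muv|[j [w [alj [Mxw Rwu]]]] Muv].
  by exists i, v.
by exists j, w; do !split=> //; apply: IH Rwu Muv.
Qed.

Lemma reachable_krel u v i : reachable u -> krel M i u v -> reachable v.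
Proof.
by move=> [k Rsu] Muv; exists k.+1; apply: reach_rcons (in_setT i) Rsu Muv.
Qed.

Lemma reachable_reach (al : {set A}) k u v :
  reachable u -> reach M al k u v -> reachable v.
Proof.
elim: k u => [|k IH] u /= hu; first by move=> <-.
by move=> [i [w [_ [Muw Rwv]]]]; apply: IH Rwv; apply: reachable_krel Muw.
Qed.

Definition definite_at : Prop :=
  forall (p : fform F) (i : A),
    [\/ holds M s (init_formula (InitCB i p)),
        holds M s (init_formula (InitCBW i p)) |
        holds M s (init_formula (InitCN i p))].

Definition interp_rel (i : A) (J J' : {set F}) : Prop :=
  J = J' \/ exists a b,
    [/\ reachable a, krel M i a b, kval M a = J & kval M b = J'].

Definition interp_model := Kripke (fun J : {set F} => J) interp_rel.

Hypotheses (S5M : S5 M) (defM : definite_at).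

Lemma interp_rel_lift u i J' :
  reachable u -> interp_rel i (kval M u) J' ->
  exists2 v, krel M i u v & kval M v = J'.
Proof.
have refl w : krel M i w w by case: (S5M i).
move=> hu; case: (eqVneq (kval M u) J') => [<-|neJ'] Rel; first by exists u.
have [a [b [ha Mab eJ eJ']]] : exists a b,
    [/\ reachable a, krel M i a b, kval M a = kval M u & kval M b = J'].
  by case: Rel => // /eqP; rewrite (negbTE neJ').
have [f0 _] : exists f0 : F, true.
  case: (pickP (@predT F)) => [f0 _|noF]; first by exists f0.
  by case/eqP: neJ'; apply/setP => f; have := noF f.
have [[k Rsu] [k' Rsa]] := (hu, ha).
case: (defM (char_form f0 J') i) => /= [Bchi|BchiW|Nchi].
- by case/eqP: neJ'; apply/fsat_char_form; apply: Bchi Rsu _ (refl u).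
- case: (BchiW _ _ Rsa) => [Ba|BNa].
    by case/eqP: neJ'; rewrite -eJ; apply/fsat_char_form; apply: Ba.
  by case: (BNa b Mab); apply/fsat_char_form.
- have [_ noBN] := Nchi _ _ Rsu.
  apply: NNPP => noV; apply: noBN => v Muv /fsat_char_form ev.
  by apply: noV; exists v.
Qed.

Lemma interp_relP u i J' :
  reachable u ->
  interp_rel i (kval M u) J' <-> exists2 v, krel M i u v & kval M v = J'.
Proof.
move=> hu; split; first exact: interp_rel_lift.
by move=> [v Muv <-]; right; exists u, v.
Qed.

Lemma interp_model_S5 : S5 interp_model.
Proof.
move=> i; have [_ symM transM] := S5M i; split=> /=.
- by move=> J; left.
- move=> J J' [-> |[a [b [ha Mab <- <-]]]]; first by left.
  by right; exists b, a; split=> //; [apply: reachable_krel Mab | apply: symM].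
- move=> J J' J'' [-> //|[a [b [ha Mab eJ eJ']]]].
  rewrite -eJ -eJ' => Rel'; have hb := reachable_krel ha Mab.
  have [c Mbc <-] := interp_rel_lift hb Rel'.
  by right; exists a, c; split=> //; apply: transM Mbc.
Qed.

Lemma reach_interpP (al : {set A}) k u J :
  reachable u ->
  reach interp_model al k (kval M u) J <->
  exists2 v, reach M al k u v & kval M v = J.
Proof.
elim: k u J => [|k IH] u J hu /=.
  by split=> [<-|[v <- <-]] //; exists u.
split=> [[i [J' [ali [Rel Rel']]]]|[v [i [w [ali [Muw Rwv]]]] <-]].
  have [w Muw ew] := interp_rel_lift hu Rel.
  rewrite -ew in Rel'.
  have [v Rwv <-] := (IH w _ (reachable_krel hu Muw)).1 Rel'.
  by exists v => //; exists i, w.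
exists i, (kval M w); do !split=> //.
  by apply/interp_relP => //; exists w.
by apply/IH; [apply: reachable_krel Muw | exists v].
Qed.

Lemma holds_interp_model p u :
  reachable u -> holds M u p <-> holds interp_model (kval M u) p.
Proof.
elim: p u => [q|i q IH|q IH|q IH r IH'|q IH r IH'|q IH r IH'|al q IH|al q IH]
  u hu /=; rewrite ?IH ?IH' //.
- apply: box_lift => [J|v Muv]; first exact: interp_relP.
  by apply: IH; apply: reachable_krel Muv.
- have boxP i : (forall v, krel M i u v -> holds M v q) <->
      (forall J, interp_rel i (kval M u) J -> holds interp_model J q).
    apply: box_lift => [J|v Muv]; first exact: interp_relP.
    by apply: IH; apply: reachable_krel Muv.
  by split=> h i ali; apply/boxP; apply: h.
- have boxP k : (forall v, reach M al k u v -> holds M v q) <->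
      (forall J, reach interp_model al k (kval M u) J ->
         holds interp_model J q).
    apply: box_lift => [J|v Rv]; first exact: reach_interpP.
    by apply: IH; apply: reachable_reach Rv.
  by split=> h k; apply/boxP; apply: h.
Qed.

End Collapse.

Theorem lemma16 (A F : finType) (I : init_stmt A F -> Prop) :
  definite_init I ->
  forall (W : Type) (M : kripke A F W) (s : W),
    S5 M -> sat_init M s I ->
    exists (W' : finType) (M' : kripke A F W') (s' : W'),
      [/\ S5 M', #|W'| <= 2 ^ #|F| & equiv_state M s M' s'].
Proof.
move=> defI W M s S5M satI.
have defM : definite_at M s.
  by move=> p i; case: (defI p i) => [/satI|[/satI|/satI]]; constructor.
exists {set F}%type, (interp_model M s), (kval M s); split.
- exact: interp_model_S5.
- by rewrite -cardsT -powersetT card_powerset cardsT.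
- by move=> p; apply: (holds_interp_model S5M defM); exists 0.
Qed.
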